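(* Let $F_0$ be a quantifier-free formula in conjunctive normal form whose atoms are polynomial inequalities with integer coefficients over integer-valued variables (a QF-NIA formula). Consider the following procedure $\mathrm{SolveMinModels}(F_0)$, which is parametrized by a family of cost functions and by an optimization oracle. (1) Choose a finite set $B$ of artificial bounds (constraints $V\ge L$ or $V\le U$ with $L,U\in\mathbb{Z}$ on variables $V$ of $F_0$) sufficient to linearize $F_0$, and let $F$ be the linearization of $F_0$ with artificial bounds $B$ (as defined in the context). (2) Repeat until a time limit is exceeded: call the oracle on $(F,B)$. The oracle either returns $\mathrm{Unsat}$, which it does only if $F$ is unsatisfiable over the integers, or returns a model $M$ of $F$ minimizing $\mathrm{cost}(M)$ among all models of $F$, where $\mathrm{cost}$ is the cost function associated with the current $F$ and $B$. If the oracle returns $\mathrm{Unsat}$, the procedure returns $\mathrm{Unsat}$. Otherwise, if $\mathrm{cost}(M)=0$, the procedure returns $\mathrm{Sat}$. Otherwise, choose a nonempty set $S$ of bounds of $B$ violated by $M$. Form $B'$ from $B$ by replacing each $V\ge L$ in $S$ with $V\ge M(V)$ and each $V\le U$ in $S$ with $V\le M(V)$. Add to $F$ the case-splitting clauses $V=K\rightarrow v_Q=Q[V:=K]$ for every value $K$ newly included in the domain of $V$ and every monomial $Q$ linearized using $V$. Set $B:=B'$. (3) If the time limit is exceeded, return $\mathrm{Unknown}$. Suppose that, at every iteration, the cost function used is admissible for the current linearization $F$ of $F_0$ with the current artificial bounds $B$. Then: (i) if $\mathrm{SolveMinModels}(F_0)$ returns $\mathrm{Sat}$, then $F_0$ is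 satisfiable over the integers; and (ii) if $\mathrm{SolveMinModels}(F_0)$ returns $\mathrm{Unsat}$, then $F_0$ is unsatisfiable over the integers.
   Context: Linearization. Let $F_0$ be a QF-NIA formula and let $B$ be a set of artificial bounds, i.e. constraints $V\ge L$ or $V\le U$ on variables of $F_0$. A linearization $F$ of $F_0$ with artificial bounds $B$ is a QF-LIA formula obtained as follows. While some non-linear monomial $Q$ occurs, pick a variable $V$ of $Q$ that has both a lower bound $l$ and an upper bound $u$ in $F_0\cup B$. Introduce a fresh integer variable $v_Q$ and replace every occurrence of $Q$ by $v_Q$. Add, for each integer $K$ with $l\le K\le u$, the case-splitting clause $V=K\rightarrow v_Q=Q[V:=K]$, where $Q[V:=K]$ is $Q$ with $V$ evaluated at $K$. If new non-linear monomials appear in these clauses, they are processed in the same way. The resulting formula $F$ consists of the clauses of $F_0$ with monomials replaced, together with all case-splitting clauses. It does not contain the bounds of $B$. A model of $F$ is an integer assignment to the original and fresh variables satisfying $F$; it need not satisfy $B$. Admissibility. A function $\mathrm{cost}$ on the models of $F$ is admissible if (1) $\mathrm{cost}(M)\ge 0$ for every model $M$ of $F$, and (2) whenever $\mathrm{cost}(M)=0$, the assignment $M$ (restricted to the variables of $F_0$) is a model of $F_0$. *)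

From HB Require Import structures.
From mathcomp Require Import all_boot all_order all_algebra.
Set Implicit Arguments. Unset Strict Implicit. Unset Printing Implicit Defensive.
Import Order.TTheory GRing.Theory Num.Theory.
Local Open Scope ring_scope.

Definition var := nat.

(* A monomial is a power product of variables, given as the list of its
   variables with repetitions (x^2*y = [:: x; x; y]); two monomials are the
   same monomial iff they are permutations of each other ([perm_eq]).
   [::] is the constant monomial 1. *)
Definition monomial := seq var.

Definition poly := seq (int * monomial).

Inductive cmp := CGe | CGt | CLe | CLt | CEq | CNe.

Definition cmp_code (c : cmp) : nat :=
  match c with CGe => 0 | CGt => 1 | CLe => 2 | CLt => 3 | CEq => 4 | CNe => 5 end%N.
Definition cmp_decode (n : nat) : option cmp :=
  match n with 0 => Some CGe | 1 => Some CGt | 2 => Some CLe | 3 => Some CLt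
  | 4 => Some CEq | 5 => Some CNe | _ => None end%N.
Lemma cmp_codeK : pcancel cmp_code cmp_decode. Proof. by case. Qed.
HB.instance Definition _ := Equality.copy cmp (pcan_type cmp_codeK).

(* An atom (p, c) stands for the polynomial constraint  p c 0. *)
Definition atom := (poly * cmp)%type.
Definition clause := seq atom.
Definition formula := seq clause.

(* Artificial bound: (true, V, L) is  V >= L  and (false, V, U) is  V <= U. *)
Definition bound := (bool * var * int)%type.
Definition bvar (b : bound) : var := b.1.2.
Definition bval (b : bound) : int := b.2.
Definition is_lower (b : bound) : bool := b.1.1.

Definition assignment := var -> int.

Definition eval_mono (M : assignment) (m : monomial) : int := \prod_(x <- m) M x.
Definition eval_poly (M : assignment) (p : poly) : int :=
  \sum_(t <- p) t.1 * eval_mono M t.2.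
Definition eval_cmp (c : cmp) (z : int) : bool :=
  match c with
  | CGe => 0 <= z | CGt => 0 < z | CLe => z <= 0 | CLt => z < 0
  | CEq => z == 0 | CNe => z != 0 end.
Definition atom_holds (M : assignment) (a : atom) : bool := eval_cmp a.2 (eval_poly M a.1).
Definition clause_holds (M : assignment) (c : clause) : bool := has (atom_holds M) c.
Definition holds (M : assignment) (F : formula) : bool := all (clause_holds M) F.
Definition satisfiable (F : formula) : Prop := exists M : assignment, holds M F.

Definition bound_holds (M : assignment) (b : bound) : bool :=
  if is_lower b then bval b <= M (bvar b) else M (bvar b) <= bval b.

Definition formula_monos (F : formula) : seq monomial :=
  flatten (flatten [seq [seq [seq t.2 | t <- a.1] | a <- c] | c <- F]).

Definition vars (F : formula) : seq var := flatten (formula_monos F).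

Definition occurs_nonlinear (Q : monomial) (F : formula) : Prop :=
  Q \in formula_monos F /\ (2 <= size Q)%N.

Definition linear_formula (F : formula) : bool :=
  all (fun m : monomial => size m <= 1)%N (formula_monos F).

Definition artificial_bounds (F0 : formula) (B : seq bound) : Prop :=
  forall b, b \in B -> bvar b \in vars F0.

Definition has_lower (F0 : formula) (B : seq bound) (V : var) (l : int) : Prop :=
  (true, V, l) \in B \/
  exists a : atom, [:: a] \in F0 /\ forall M : assignment, atom_holds M a = (l <= M V).
Definition has_upper (F0 : formula) (B : seq bound) (V : var) (u : int) : Prop :=
  (false, V, u) \in B \/
  exists a : atom, [:: a] \in F0 /\ forall M : assignment, atom_holds M a = (M V <= u).

Definition zrange (a b : int) : seq int :=
  if a <= b then mkseq (fun i => a + i%:Z) (absz (b - a)).+1 else [::].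

Definition replace_mono (Q : monomial) (v : var) (m : monomial) : monomial :=
  if perm_eq m Q then [:: v] else m.
Definition replace_formula (Q : monomial) (v : var) (F : formula) : formula :=
  [seq [seq ([seq (t.1, replace_mono Q v t.2) | t <- a.1], a.2) | a <- c] | c <- F].

(* The case-splitting clause  V = K -> v = Q[V:=K],  where
   Q[V:=K] = K^e * Q' with e the multiplicity of V in Q and Q' = Q without V.
   Written as the CNF clause  (V - K != 0) \/ (v - K^e * Q' = 0). *)
Definition case_clause (v : var) (Q : monomial) (V : var) (K : int) : clause :=
  [:: ([:: (1, [:: V]); (- K, [::])], CNe);
      ([:: (1, [:: v]); (- (K ^+ count_mem V Q), filter (predC1 V) Q)], CEq)].

(* State of a linearization: the current formula, the variables used so far
   (those of F0 and the fresh ones), and the record of linearized monomials: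
   (v_Q, Q, V) means the fresh variable v_Q replaced Q, linearized using V. *)
Record lstate := LState {
  fm : formula;
  used : seq var;
  lin : seq (var * monomial * var)
}.

Definition init_state (F0 : formula) : lstate := LState F0 (vars F0) [::].

Inductive lin_step (F0 : formula) (B : seq bound) : lstate -> lstate -> Prop :=
| LinStep (st : lstate) (Q : monomial) (V : var) (l u : int) (v : var) :
    occurs_nonlinear Q (fm st) ->
    V \in Q ->
    has_lower F0 B V l -> has_upper F0 B V u ->
    v \notin used st ->
    lin_step F0 B st
      (LState (replace_formula Q v (fm st) ++
                 [seq case_clause v Q V K | K <- zrange l u])
              (v :: used st) ((v, Q, V) :: lin st)).

Inductive lin_steps (F0 : formula) (B : seq bound) : lstate -> lstate -> Prop :=
| LinRefl st : lin_steps F0 B st st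
| LinTrans st1 st2 st3 :
    lin_step F0 B st1 st2 -> lin_steps F0 B st2 st3 -> lin_steps F0 B st1 st3.

Definition linearizes (F0 : formula) (B : seq bound) (st st' : lstate) : Prop :=
  lin_steps F0 B st st' /\ linear_formula (fm st').

Definition linearization (F0 : formula) (B : seq bound) (st : lstate) : Prop :=
  linearizes F0 B (init_state F0) st.

Definition admissible (R : realDomainType) (F0 F : formula) (cost : assignment -> R) : Prop :=
  (forall M, holds M F -> 0 <= cost M) /\
  (forall M, holds M F -> cost M = 0 -> holds M F0).

Definition min_model (R : realDomainType) (F : formula) (cost : assignment -> R)
  (M : assignment) : Prop :=
  holds M F /\ forall M', holds M' F -> cost M <= cost M'.

Definition upd_bound (M : assignment) (b : bound) : bound :=
  (is_lower b, bvar b, M (bvar b)).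

Definition new_values (M : assignment) (b : bound) : seq int :=
  if is_lower b then zrange (M (bvar b)) (bval b - 1)
  else zrange (bval b + 1) (M (bvar b)).

(* In the added clauses, a non-linear monomial already linearized is replaced
   by its fresh variable (first recorded one). *)
Definition rename_fresh (ln : seq (var * monomial * var)) (m : monomial) : monomial :=
  if (2 <= size m)%N then
    match [seq d <- ln | perm_eq d.1.2 m] with
    | d :: _ => [:: d.1.1]
    | [::] => m
    end
  else m.
Definition rename_clause (ln : seq (var * monomial * var)) (c : clause) : clause :=
  [seq ([seq (t.1, rename_fresh ln t.2) | t <- a.1], a.2) | a <- c].

Definition new_clauses (ln : seq (var * monomial * var)) (M : assignment)
  (S : seq bound) : formula :=
  flatten [seq flatten [seq [seq rename_clause ln (case_clause d.1.1 d.1.2 d.2 K)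
                            | K <- new_values M b]
                       | d <- ln & d.2 == bvar b]
          | b <- S].

(* States (current linearization state, current artificial bounds) reached at
   the beginning of an iteration of step (2) of SolveMinModels(F0), where the
   cost family [cost] gives the cost function associated with (F, B). *)
Inductive reachable (R : realDomainType) (F0 : formula)
  (cost : formula -> seq bound -> assignment -> R) : lstate -> seq bound -> Prop :=
| ReachInit (B : seq bound) (st : lstate) :
    artificial_bounds F0 B ->
    linearization F0 B st ->
    reachable F0 cost st B
| ReachStep (st : lstate) (B : seq bound) (M : assignment) (S : seq bound) (st' : lstate) :
    reachable F0 cost st B ->
    min_model (fm st) (cost (fm st) B) M ->
    cost (fm st) B M != 0 ->
    S != [::] -> {subset S <= B} -> all (fun b => ~~ bound_holds M b) S ->
    (* new bounds B', new clauses added, remaining monomials processed *)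
    linearizes F0 [seq if b \in S then upd_bound M b else b | b <- B]
      (LState (fm st ++ new_clauses (lin st) M S) (used st) (lin st)) st' ->
    reachable F0 cost st' [seq if b \in S then upd_bound M b else b | b <- B].

Inductive result := Sat | Unsat | Unknown.

(* SolveMinModels(F0) may return [r]. The oracle returns Unsat only if the
   current F is unsatisfiable; Unknown may be returned when the time limit is
   exceeded (at any iteration). *)
Inductive solve_returns (R : realDomainType) (F0 : formula)
  (cost : formula -> seq bound -> assignment -> R) : result -> Prop :=
| RetUnsat st B :
    reachable F0 cost st B -> ~ satisfiable (fm st) -> solve_returns F0 cost Unsat
| RetSat st B M :
    reachable F0 cost st B -> min_model (fm st) (cost (fm st) B) M ->
    cost (fm st) B M = 0 -> solve_returns F0 cost Sat
| RetUnknown st B :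
    reachable F0 cost st B -> solve_returns F0 cost Unknown.

From mathcomp Require Import all_boot all_order all_algebra.
Import Order.TTheory GRing.Theory Num.Theory.
Local Open Scope ring_scope.
Set Implicit Arguments.
Unset Strict Implicit.

(* A Sat answer is correct by admissibility: a model of the current
   linearization with cost 0 is a model of F0. For Unsat, a model of F0
   extends to a model of every linearization reached by the procedure by
   giving each fresh variable v_Q the value of its monomial Q. This survives
   each linearization step because v_Q is fresh: it occurs neither in the
   current formula nor in the recorded monomials, so updating it changes no
   other value. Case-splitting clauses hold under any such assignment, and so
   do the clauses added when bounds are moved. Hence if F0 is satisfiable, so
   is every reachable F, and the oracle never answers Unsat. *)

Definition map_clause_monos (f : monomial -> monomial) (c : clause) : clause :=
  [seq ([seq (t.1, f t.2) | t <- a.1], a.2) | a <- c].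

Lemma mem_formula_monos (F : formula) (c : clause) (a : atom) (t : int * monomial) :
  c \in F -> a \in c -> t \in a.1 -> t.2 \in formula_monos F.
Proof.
move=> cF ac ta; apply/flattenP; exists [seq u.2 | u <- a.1]; last exact: map_f.
apply/flatten_mapP; exists c => //; exact: (map_f (fun b : atom => [seq u.2 | u <- b.1])).
Qed.

Lemma mem_vars (F : formula) (m : monomial) :
  m \in formula_monos F -> {subset m <= vars F}.
Proof. by move=> mF x xm; apply/flattenP; exists m. Qed.

Lemma formula_monos_map f (F : formula) :
  formula_monos (map (map_clause_monos f) F) = map f (formula_monos F).
Proof.
rewrite /formula_monos; elim: F => //= c F IH.
rewrite !flatten_cat map_cat IH; congr (_ ++ _).
by elim: c => //= a c IHc; rewrite map_cat IHc -!map_comp.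
Qed.

Lemma replace_formulaE Q v F :
  replace_formula Q v F = map (map_clause_monos (replace_mono Q v)) F.
Proof. by []. Qed.

Lemma rename_clauseE ln c :
  [:: rename_clause ln c] = map (map_clause_monos (rename_fresh ln)) [:: c].
Proof. by []. Qed.

Lemma vars_map_monos f (F : formula) :
  vars (map (map_clause_monos f) F) = flatten (map f (formula_monos F)).
Proof. by rewrite /vars formula_monos_map. Qed.

Lemma vars_cat (F G : formula) : vars (F ++ G) = vars F ++ vars G.
Proof. by rewrite /vars /formula_monos map_cat !flatten_cat. Qed.

Lemma vars_clauseP (F : formula) (x : var) :
  reflect (exists2 c, c \in F & x \in vars [:: c]) (x \in vars F).
Proof.
elim: F => [|c F IH]; first by right; case.
rewrite -cat1s vars_cat mem_cat; apply: (iffP orP) => [[xc|/IH [c' c'F xc']]|].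
- by exists c; rewrite ?mem_head.
- by exists c'; rewrite // inE c'F orbT.
case=> c'; rewrite inE => /orP [/eqP -> | c'F xc']; first by left.
by right; apply/IH; exists c'.
Qed.

Lemma vars_case_clause v Q V K : {subset vars [:: case_clause v Q V K] <= [:: v, V & Q]}.
Proof.
move=> x; rewrite /vars /formula_monos /= cats0 !inE mem_filter.
by case/or3P => [->|->|/andP [_ ->]]; rewrite ?orbT.
Qed.

Lemma holds_map_monos (N N' : assignment) f (F : formula) :
  {in formula_monos F, forall m, eval_mono N' (f m) = eval_mono N m} ->
  holds N' (map (map_clause_monos f) F) = holds N F.
Proof.
move=> Hf; rewrite /holds all_map; apply: eq_in_all => c cF.
rewrite /= /clause_holds /map_clause_monos has_map; apply: eq_in_has => a ac.
rewrite /= /atom_holds /eval_poly /= big_map; congr eval_cmp; apply: eq_big_seq => t ta.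
by rewrite Hf //; apply: mem_formula_monos ac ta.
Qed.

Lemma holds_cat (N : assignment) (F G : formula) :
  holds N (F ++ G) = holds N F && holds N G.
Proof. exact: all_cat. Qed.

Lemma holds_seq1 (N : assignment) (c : clause) : holds N [:: c] = clause_holds N c.
Proof. exact: andbT. Qed.

Lemma eval_mono_seq1 (N : assignment) (x : var) : eval_mono N [:: x] = N x.
Proof. exact: big_seq1. Qed.

Lemma eval_mono_perm (N : assignment) (m m' : monomial) :
  perm_eq m m' -> eval_mono N m = eval_mono N m'.
Proof. exact: perm_big. Qed.

Lemma eval_mono_upd (N : assignment) (v : var) (z : int) (m : monomial) :
  v \notin m -> eval_mono [eta N with v |-> z] m = eval_mono N m.
Proof.
move=> vm; apply: eq_big_seq => x xm /=.
by case: eqP => // xv; rewrite -xv xm in vm.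
Qed.

Lemma eval_mono_count_mem (N : assignment) (V : var) (Q : monomial) :
  eval_mono N Q = N V ^+ count_mem V Q * eval_mono N (filter (predC1 V) Q).
Proof.
rewrite /eval_mono; elim: Q => [|x Q IH]; first by rewrite !big_nil mulr1.
rewrite /= big_cons IH; case: eqP => [->|/eqP xV] /=; first by rewrite exprS mulrA.
by rewrite big_cons mulrCA.
Qed.

Lemma case_clause_holds (N : assignment) v Q V K :
  N v = eval_mono N Q -> clause_holds N (case_clause v Q V K).
Proof.
move=> Nv; rewrite /clause_holds /atom_holds /eval_poly /= !big_cons !big_nil.
rewrite !eval_mono_seq1 /eval_mono big_nil !mulr1 !mul1r !addr0 subr_eq0.
case: eqP => //= <-; rewrite orbF Nv (eval_mono_count_mem N V Q).
by rewrite mulNr subrr.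
Qed.

Variant rename_fresh_spec (ln : seq (var * monomial * var)) (m : monomial) :
  monomial -> Prop :=
| RenameKeep : rename_fresh_spec ln m m
| RenameFresh d of d \in ln & perm_eq d.1.2 m : rename_fresh_spec ln m [:: d.1.1].

Lemma rename_freshP ln m : rename_fresh_spec ln m (rename_fresh ln m).
Proof.
rewrite /rename_fresh; case: ifP => _; last exact: RenameKeep.
case E: [seq d <- ln | perm_eq d.1.2 m] => [|d s]; first exact: RenameKeep.
have : d \in [seq d <- ln | perm_eq d.1.2 m] by rewrite E mem_head.
by rewrite mem_filter => /andP [? ?]; apply: RenameFresh.
Qed.

Lemma mem_new_clauses ln M S c : c \in new_clauses ln M S ->
  exists2 d, d \in ln & exists K, c = rename_clause ln (case_clause d.1.1 d.1.2 d.2 K).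
Proof.
case/flatten_mapP => b _ /flatten_mapP [d]; rewrite mem_filter => /andP [_ dln].
by case/mapP => K _ ->; exists d => //; exists K.
Qed.

Definition well_scoped (st : lstate) : Prop :=
  {subset vars (fm st) <= used st} /\
  {in lin st, forall d : var * monomial * var,
    {subset [:: d.1.1, d.2 & d.1.2] <= used st}}.

Definition defines_fresh (N : assignment) (ln : seq (var * monomial * var)) : Prop :=
  {in ln, forall d : var * monomial * var, N d.1.1 = eval_mono N d.1.2}.

Definition lin_satisfiable (st : lstate) : Prop :=
  exists2 N, holds N (fm st) & defines_fresh N (lin st).

Definition lin_invariant (st : lstate) : Prop := well_scoped st /\ lin_satisfiable st.

Lemma lin_step_well_scoped F0 B st st' :
  lin_step F0 B st st' -> well_scoped st -> well_scoped st'.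
Proof.
case=> {}st Q V l u v [QF _] VQ _ _ _ [F_used lin_used] /=.
have Q_used : {subset Q <= used st} by move=> x /(mem_vars QF) /F_used.
split=> [x | d].
  rewrite vars_cat mem_cat => /orP [].
    rewrite replace_formulaE vars_map_monos => /flatten_mapP [m mF].
    rewrite /replace_mono.
    case: ifP => _; first by rewrite mem_seq1 => /eqP ->; rewrite mem_head.
    by move=> /(mem_vars mF) /F_used xu; rewrite inE xu orbT.
  case/vars_clauseP => _ /mapP [K _ ->] /vars_case_clause.
  by rewrite !inE => /or3P [-> // | /eqP -> | /Q_used ->]; rewrite ?Q_used ?orbT.
rewrite inE => /orP [/eqP -> | /lin_used d_used] x.
  by rewrite !inE => /or3P [-> // | /eqP -> | /Q_used ->]; rewrite ?Q_used ?orbT.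
by move=> /d_used xu; rewrite inE xu orbT.
Qed.

Lemma lin_step_satisfiable F0 B st st' :
  lin_step F0 B st st' -> well_scoped st -> lin_satisfiable st -> lin_satisfiable st'.
Proof.
case=> {}st Q V l u v [QF _] _ _ _ v_fresh [F_used lin_used] [N NF N_fresh] /=.
pose N' := [eta N with v |-> eval_mono N Q].
have N'_used m : {subset m <= used st} -> eval_mono N' m = eval_mono N m.
  by move=> m_used; apply: eval_mono_upd; apply: contra v_fresh => /m_used.
have N'_Q : eval_mono N' Q = eval_mono N Q by apply/N'_used => x /(mem_vars QF) /F_used.
exists N'.
  rewrite holds_cat; apply/andP; split.
    rewrite replace_formulaE (holds_map_monos (N := N)) // => m mF; rewrite /replace_mono.
    case: ifP => [mQ | _]; last by apply/N'_used => x /(mem_vars mF) /F_used.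
    by rewrite eval_mono_seq1 /= eqxx (eval_mono_perm N mQ).
  rewrite /holds all_map; apply/allP => K _.
  by apply: case_clause_holds; rewrite /= eqxx N'_Q.
move=> d; rewrite inE => /orP [/eqP -> /= | d_lin]; first by rewrite eqxx N'_Q.
have d_used := lin_used d d_lin.
rewrite N'_used => [/= | x xd]; last by apply: d_used; rewrite !inE xd !orbT.
case: eqP => [dv | _]; last exact: N_fresh.
by move: v_fresh; rewrite -dv d_used ?mem_head.
Qed.

Lemma lin_steps_invariant F0 B st st' :
  lin_steps F0 B st st' -> lin_invariant st -> lin_invariant st'.
Proof.
elim=> // s1 s2 s3 step _ IH [sc sat].
apply: IH; split; first exact: lin_step_well_scoped step sc.
exact: lin_step_satisfiable step sc sat.
Qed.

Definition add_new_clauses (st : lstate) (M : assignment) (S : seq bound) : lstate :=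
  LState (fm st ++ new_clauses (lin st) M S) (used st) (lin st).

Lemma add_new_clauses_well_scoped st M S :
  well_scoped st -> well_scoped (add_new_clauses st M S).
Proof.
move=> [F_used lin_used]; split=> //= x.
rewrite vars_cat mem_cat => /orP [/F_used // |].
case/vars_clauseP => _ /mem_new_clauses [d d_lin [K ->]].
rewrite rename_clauseE vars_map_monos.
case/flatten_mapP => m m_case; case: rename_freshP => [xm | d' d'_lin _].
  apply: (lin_used d d_lin); apply: (vars_case_clause (K := K)).
  exact: mem_vars m_case _ xm.
by rewrite mem_seq1 => /eqP ->; apply: (lin_used d' d'_lin); rewrite mem_head.
Qed.

Lemma add_new_clauses_satisfiable st M S :
  lin_satisfiable st -> lin_satisfiable (add_new_clauses st M S).
Proof.
move=> [N NF N_fresh]; exists N => //=.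
rewrite holds_cat NF; apply/allP => _ /mem_new_clauses [d d_lin [K ->]].
rewrite -holds_seq1 rename_clauseE (holds_map_monos (N := N)).
  by rewrite holds_seq1; apply: case_clause_holds; apply: N_fresh.
move=> m _; case: rename_freshP => // d' d'_lin m_d'.
by rewrite eval_mono_seq1 N_fresh // (eval_mono_perm N m_d').
Qed.

Lemma reachable_invariant (R : realDomainType) F0
    (cost : formula -> seq bound -> assignment -> R) st B :
  satisfiable F0 -> reachable F0 cost st B -> lin_invariant st.
Proof.
move=> [M0 M0F0]; elim=> {st B} [B st _ [steps _] |
    st B M S st' _ [sc sat] _ _ _ _ _ [steps _]].
  by apply: (lin_steps_invariant steps); split; [split | exists M0].
apply: (lin_steps_invariant steps); split.
  exact: add_new_clauses_well_scoped.
exact: add_new_clauses_satisfiable.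
Qed.

Theorem theorem3p1 (R : realDomainType) (F0 : formula)
  (cost : formula -> seq bound -> assignment -> R) :
  (forall (st : lstate) (B : seq bound),
      reachable F0 cost st B -> admissible F0 (fm st) (cost (fm st) B)) ->
  (solve_returns F0 cost Sat -> satisfiable F0) /\
  (solve_returns F0 cost Unsat -> ~ satisfiable F0).
Proof.
move=> cost_admissible; split.
  case E: _ / => // [st B M reach [MF _] cost0].
  by exists M; apply: (cost_admissible _ _ reach).2 MF cost0.
case E: _ / => // [st B reach F_unsat] F0_sat.
have [_ [N NF _]] := reachable_invariant F0_sat reach.
by apply: F_unsat; exists N.
Qed.
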